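(* Let $\mathcal{V}$ be a quaternionic two-sided Banach algebra with unit and let $v\in\mathcal{V}$. Then $$\partial\sigma_{S}(v)\subseteq B_{S,\partial}(v)\subseteq \sigma_{S}(v).$$
   Context: $\mathbb{H}$ denotes the quaternions, $Re(q)$ the real part and $|q|$ the norm of $q$. A quaternionic two-sided Banach algebra with unit is a two-sided $\mathbb{H}$-vector space $\mathcal{V}$ with an associative product satisfying $x(y+z)=xy+xz$, $(x+y)z=xz+yz$, $q(xy)=(qx)y$, $(xy)q=x(yq)$, complete for a norm with $\|qx\|=|q|\|x\|=\|xq\|$, $\|xy\|\le\|x\|\|y\|$, with unit $1_{\mathcal{V}}\ne0$, $\|1_{\mathcal{V}}\|=1$. $\mathcal{V}^{-1}$ is the set of invertible elements. $R_q(v)=v^2-2Re(q)v+|q|^21_{\mathcal{V}}$. S-spectrum: $\sigma_S(v)=\{q\in\mathbb{H}:R_q(v)\notin\mathcal{V}^{-1}\}$, with boundary $\partial\sigma_S(v)$ in $\mathbb{H}$. Boundary S-spectrum: $B_{S,\partial}(v)=\{q\in\mathbb{H}: R_q(v)\in\partial(\mathcal{V}\setminus\mathcal{V}^{-1})\}$, where $\partial(\mathcal{V}\setminus\mathcal{V}^{-1})$ is the topological boundary in $\mathcal{V}$. *)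

From mathcomp Require Import all_boot all_order all_algebra.
From mathcomp Require Import reals.
Set Implicit Arguments. Unset Strict Implicit. Unset Printing Implicit Defensive.
Import Order.TTheory GRing.Theory Num.Theory.
Local Open Scope ring_scope.

Record quat (R : Type) := Quat { qre : R; qi : R; qj : R; qk : R }.

Section Quat.
Variable R : realType.
Definition qadd (p q : quat R) : quat R :=
  Quat (qre p + qre q) (qi p + qi q) (qj p + qj q) (qk p + qk q).
Definition qopp (p : quat R) : quat R :=
  Quat (- qre p) (- qi p) (- qj p) (- qk p).
Definition qsub (p q : quat R) : quat R := qadd p (qopp q).
Definition qmul (p q : quat R) : quat R :=
  Quat (qre p * qre q - qi p * qi q - qj p * qj q - qk p * qk q)
       (qre p * qi q + qi p * qre q + qj p * qk q - qk p * qj q)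
       (qre p * qj q - qi p * qk q + qj p * qre q + qk p * qi q)
       (qre p * qk q + qi p * qj q - qj p * qi q + qk p * qre q).
Definition qreal (r : R) : quat R := Quat r 0 0 0.
Definition qone : quat R := qreal 1.
Definition Req (q : quat R) : R := qre q.
Definition qnorm (q : quat R) : R :=
  Num.sqrt (qre q ^+ 2 + qi q ^+ 2 + qj q ^+ 2 + qk q ^+ 2).
End Quat.

Record QBA (R : realType) := {
  carrier :> Type;
  vadd : carrier -> carrier -> carrier;
  vzero : carrier;
  vopp : carrier -> carrier;
  lsc : quat R -> carrier -> carrier;
  rsc : carrier -> quat R -> carrier;
  vmul : carrier -> carrier -> carrier;
  vone : carrier;
  vnorm : carrier -> R;
  vaddA : forall x y z, vadd x (vadd y z) = vadd (vadd x y) z;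
  vaddC : forall x y, vadd x y = vadd y x;
  vadd0 : forall x, vadd vzero x = x;
  vaddN : forall x, vadd x (vopp x) = vzero;
  lscDr : forall q x y, lsc q (vadd x y) = vadd (lsc q x) (lsc q y);
  lscDl : forall p q x, lsc (qadd p q) x = vadd (lsc p x) (lsc q x);
  lscA : forall p q x, lsc (qmul p q) x = lsc p (lsc q x);
  lsc1 : forall x, lsc (qone R) x = x;
  rscDl : forall q x y, rsc (vadd x y) q = vadd (rsc x q) (rsc y q);
  rscDr : forall p q x, rsc x (qadd p q) = vadd (rsc x p) (rsc x q);
  rscA : forall p q x, rsc x (qmul p q) = rsc (rsc x p) q;
  rsc1 : forall x, rsc x (qone R) = x;
  lrsc : forall p q x, rsc (lsc p x) q = lsc p (rsc x q);
  vmulA : forall x y z, vmul x (vmul y z) = vmul (vmul x y) z;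
  vmulDr : forall x y z, vmul x (vadd y z) = vadd (vmul x y) (vmul x z);
  vmulDl : forall x y z, vmul (vadd x y) z = vadd (vmul x z) (vmul y z);
  lsc_mul : forall q x y, lsc q (vmul x y) = vmul (lsc q x) y;
  rsc_mul : forall q x y, rsc (vmul x y) q = vmul x (rsc y q);
  vmul1l : forall x, vmul vone x = x;
  vmul1r : forall x, vmul x vone = x;
  vone_neq0 : vone <> vzero;
  vnorm_ge0 : forall x, 0 <= vnorm x;
  vnorm_eq0 : forall x, vnorm x = 0 -> x = vzero;
  vnorm_triangle : forall x y, vnorm (vadd x y) <= vnorm x + vnorm y;
  vnorm_lsc : forall q x, vnorm (lsc q x) = qnorm q * vnorm x;
  vnorm_rsc : forall q x, vnorm (rsc x q) = qnorm q * vnorm x;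
  vnorm_mul : forall x y, vnorm (vmul x y) <= vnorm x * vnorm y;
  vnorm_one : vnorm vone = 1;
  vcomplete : forall u : nat -> carrier,
    (forall e : R, 0 < e -> exists N : nat, forall m n : nat, (N <= m)%N -> (N <= n)%N ->
        vnorm (vadd (u m) (vopp (u n))) < e) ->
    exists l : carrier, forall e : R, 0 < e -> exists N : nat, forall n : nat, (N <= n)%N ->
        vnorm (vadd (u n) (vopp l)) < e
}.

Section Spectra.
Variables (R : realType) (V : QBA R).

Definition vsub (x y : V) : V := vadd x (vopp y).

Definition vinvertible (x : V) : Prop :=
  exists y : V, vmul x y = vone V /\ vmul y x = vone V.

Definition Rq (v : V) (q : quat R) : V :=
  vadd (vsub (vmul v v) (lsc (qreal (2 * Req q)) v))
       (lsc (qreal (qnorm q ^+ 2)) (vone V)).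

Definition sigmaS (v : V) (q : quat R) : Prop := ~ vinvertible (Rq v q).

Definition boundaryH (S : quat R -> Prop) (q : quat R) : Prop :=
  forall e : R, 0 < e ->
    (exists p, qnorm (qsub p q) < e /\ S p) /\
    (exists p, qnorm (qsub p q) < e /\ ~ S p).

Definition boundaryV (A : V -> Prop) (x : V) : Prop :=
  forall e : R, 0 < e ->
    (exists y, vnorm (vsub y x) < e /\ A y) /\
    (exists y, vnorm (vsub y x) < e /\ ~ A y).

Definition BSd (v : V) (q : quat R) : Prop :=
  boundaryV (fun x => ~ vinvertible x) (Rq v q).
End Spectra.

From HB Require Import structures.
From mathcomp Require Import all_boot all_order all_algebra.
From mathcomp Require Import boolp reals.
From mathcomp Require Import ring lra.
Set Implicit Arguments. Unset Strict Implicit. Unset Printing Implicit Defensive.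
Import Order.TTheory GRing.Theory Num.Theory.
Local Open Scope ring_scope.

(* The map q |-> R_q(v) is continuous from H to V, so if q is a boundary point of
   sigma_S(v), then R_q(v) is a limit both of non-invertible values R_p(v) and of
   invertible ones, i.e. it lies on the boundary of the non-invertible elements.
   For the second inclusion, V^{-1} is open: if x is invertible and |a| < 1 then
   x (1 - a) is invertible, the Neumann series sum a^n inverting 1 - a. Hence a
   boundary point of the non-invertible elements is not invertible. *)

Lemma bernoulli_ineq (R : realFieldType) (h : R) n : 0 <= h -> 1 + n%:R * h <= (1 + h) ^+ n.
Proof.
move=> h0; elim: n => [|n IH]; first by rewrite mul0r addr0 expr0.
have n0 : 0 <= n%:R :> R by [].
rewrite exprS -natr1; nra.
Qed.

Lemma exists_exprn_lt (R : archiRealFieldType) (r e : R) :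
  0 <= r -> r < 1 -> 0 < e -> exists N, r ^+ N < e.
Proof.
move=> r0 r1 e0; have [->|rn0] := eqVneq r 0; first by exists 1%N; rewrite expr1.
have rp : 0 < r by rewrite lt0r rn0.
pose h := r^-1 - 1.
have h0 : 0 < h by rewrite subr_gt0 invf_gt1.
have [N ltN] : exists N : nat, (e * h)^-1 < N%:R.
  by exists (Num.Def.archi_bound (e * h)^-1); apply/archi_boundP/ltW; rewrite invr_gt0 mulr_gt0.
exists N.
have rhN : r ^+ N * (1 + h) ^+ N = 1 by rewrite -exprMn /h addrC subrK divff ?gt_eqF // expr1n.
have := bernoulli_ineq N (ltW h0).
have : 1 < N%:R * (e * h) by rewrite -ltr_pdivrMr ?mulr_gt0 // div1r.
have : 0 < r ^+ N by exact: exprn_gt0.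
move: rhN; set t := r ^+ N; set T := (1 + h) ^+ N; set n := N%:R => rhN t0 neh bern.
have eT : 1 < T * e by nra.
by rewrite -[e]mul1r -rhN -mulrA ltr_pMr.
Qed.

Definition neumann_sum (T : pzRingType) (a : T) n := \sum_(i < n) a ^+ i.

Section NeumannSum.
Variable T : pzRingType.
Implicit Types (a : T) (n k : nat).

Lemma mul1B_neumann_sum a n : (1 - a) * neumann_sum a n = 1 - a ^+ n.
Proof. by rewrite -opprB mulNr /neumann_sum -subrX1 opprB. Qed.

Lemma neumann_sum_mul1B a n : neumann_sum a n * (1 - a) = 1 - a ^+ n.
Proof.
have comm_1B : GRing.comm (1 - a) (neumann_sum a n).
  apply: commr_sum => i _; apply: commrX.
  by rewrite /GRing.comm mulrBl mulrBr mul1r mulr1.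
by rewrite -comm_1B mul1B_neumann_sum.
Qed.

Lemma neumann_sumD a n k :
  neumann_sum a (n + k) = neumann_sum a n + a ^+ n * neumann_sum a k.
Proof.
by rewrite /neumann_sum big_split_ord mulr_sumr; congr (_ + _);
  apply: eq_bigr => i _; rewrite exprD.
Qed.
End NeumannSum.

Lemma ler_norm_sqrB (R : realDomainType) (x y d c : R) :
  `|x - y| <= d -> `|y| <= c -> `|x ^+ 2 - y ^+ 2| <= d * (2 * c + d).
Proof.
rewrite !ler_norml => /andP[xy1 xy2] /andP[y1 y2].
have -> : x ^+ 2 - y ^+ 2 = (x - y) * (2 * y + (x - y)) by ring.
by move: xy1 xy2; set w := x - y => xy1 xy2; apply/andP; split; nra.
Qed.

Section Quaternions.
Variable R : realType.
Implicit Types (p q : quat R) (r s : R).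

Lemma qadd_real r s : qadd (qreal r) (qreal s) = qreal (r + s).
Proof. by rewrite /qadd /= addr0. Qed.

Lemma qmul_real r s : qmul (qreal r) (qreal s) = qreal (r * s).
Proof. by rewrite /qmul /=; congr Quat; ring. Qed.

Lemma qnorm_real r : qnorm (qreal r) = `|r|.
Proof. by rewrite /qnorm /= expr0n /= !addr0 sqrtr_sqr. Qed.

Lemma qnorm_ge0 q : 0 <= qnorm q.
Proof. exact: sqrtr_ge0. Qed.

Lemma qnorm_sqr q : qnorm q ^+ 2 = qre q ^+ 2 + qi q ^+ 2 + qj q ^+ 2 + qk q ^+ 2.
Proof. by rewrite /qnorm sqr_sqrtr // !addr_ge0 ?sqr_ge0. Qed.

Lemma ler_norm_sqrt4 (a b c d : R) : `|a| <= Num.sqrt (a ^+ 2 + b ^+ 2 + c ^+ 2 + d ^+ 2).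
Proof.
rewrite -sqrtr_sqr; apply: ler_wsqrtr.
have := sqr_ge0 b; have := sqr_ge0 c; have := sqr_ge0 d; lra.
Qed.

Lemma ler_qcomponents_qnorm q :
  [/\ `|qre q| <= qnorm q, `|qi q| <= qnorm q, `|qj q| <= qnorm q & `|qk q| <= qnorm q].
Proof.
rewrite /qnorm; split; last 3 first.
- by rewrite (_ : _ + _ = qi q ^+ 2 + qre q ^+ 2 + qj q ^+ 2 + qk q ^+ 2);
    [exact: ler_norm_sqrt4 | ring].
- by rewrite (_ : _ + _ = qj q ^+ 2 + qre q ^+ 2 + qi q ^+ 2 + qk q ^+ 2);
    [exact: ler_norm_sqrt4 | ring].
- by rewrite (_ : _ + _ = qk q ^+ 2 + qre q ^+ 2 + qi q ^+ 2 + qj q ^+ 2);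
    [exact: ler_norm_sqrt4 | ring].
exact: ler_norm_sqrt4.
Qed.

Lemma ler_dist_Req p q : `|Req p - Req q| <= qnorm (qsub p q).
Proof. by have [] := ler_qcomponents_qnorm (qsub p q). Qed.

Lemma ler_dist_qnorm_sqr p q : `|qnorm p ^+ 2 - qnorm q ^+ 2| <=
  4 * (qnorm (qsub p q) * (2 * qnorm q + qnorm (qsub p q))).
Proof.
set d := qnorm (qsub p q).
have [dre di dj dk] := ler_qcomponents_qnorm (qsub p q).
have [qre_le qi_le qj_le qk_le] := ler_qcomponents_qnorm q.
move: (ler_norm_sqrB dre qre_le) (ler_norm_sqrB di qi_le)
  (ler_norm_sqrB dj qj_le) (ler_norm_sqrB dk qk_le).
rewrite !qnorm_sqr -/d /= !ler_norml.
set b := d * _ => /andP[? ?] /andP[? ?] /andP[? ?] /andP[? ?].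
apply/andP; split; lra.
Qed.
End Quaternions.

Section QuaternionicBanachAlgebra.
Variables (R : realType) (V : QBA R).

Definition alg : Type := carrier V.

HB.instance Definition _ := gen_eqMixin alg.
HB.instance Definition _ := gen_choiceMixin alg.

Lemma alg_addNr (x : alg) : vadd (vopp x) x = vzero V.
Proof. by rewrite vaddC vaddN. Qed.

HB.instance Definition _ :=
  GRing.isZmodule.Build alg (@vaddA R V) (@vaddC R V) (@vadd0 R V) alg_addNr.

Lemma alg_one_neq0 : vone V != 0 :> alg.
Proof. exact/eqP/vone_neq0. Qed.

HB.instance Definition _ := GRing.Zmodule_isNzRing.Build alg
  (@vmulA R V) (@vmul1l R V) (@vmul1r R V) (@vmulDl R V) (@vmulDr R V) alg_one_neq0.

Definition alg_scale (r : R) (x : alg) : alg := lsc (qreal r) x.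

Lemma alg_scalerA r s x : alg_scale r (alg_scale s x) = alg_scale (r * s) x.
Proof. by rewrite /alg_scale -lscA qmul_real. Qed.

Lemma alg_scale1r : left_id 1 alg_scale.
Proof. exact: lsc1. Qed.

Lemma alg_scalerDr : right_distributive alg_scale +%R.
Proof. by move=> r x y; apply: lscDr. Qed.

Lemma alg_scalerDl x : {morph alg_scale^~ x : r s / r + s}.
Proof. by move=> r s; rewrite /alg_scale -qadd_real lscDl. Qed.

HB.instance Definition _ := GRing.Zmodule_isLmodule.Build R alg
  alg_scalerA alg_scale1r alg_scalerDr alg_scalerDl.

Lemma alg_scalerAl r (x y : alg) : r *: (x * y) = r *: x * y.
Proof. exact: lsc_mul. Qed.

HB.instance Definition _ := GRing.Lmodule_isLalgebra.Build R alg alg_scalerAl.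

Lemma alg_normMn (x : alg) n : vnorm (x *+ n) = vnorm x *+ n.
Proof. by rewrite -scaler_nat vnorm_lsc qnorm_real normr_nat mulr_natl. Qed.

Lemma alg_normN (x : alg) : vnorm (- x) = vnorm x.
Proof. by rewrite -scaleN1r vnorm_lsc qnorm_real normrN normr1 mul1r. Qed.

HB.instance Definition _ := Num.Zmodule_isNormed.Build R alg
  (@vnorm_triangle R V) (@vnorm_eq0 R V) alg_normMn alg_normN.

Lemma alg_normZ r (x : alg) : `|r *: x| = `|r| * `|x|.
Proof. by have := vnorm_lsc (qreal r) x; rewrite qnorm_real. Qed.

Lemma alg_normM (x y : alg) : `|x * y| <= `|x| * `|y|.
Proof. exact: vnorm_mul. Qed.

Lemma alg_norm1 : `|1 : alg| = 1.
Proof. exact: vnorm_one. Qed.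

Lemma alg_normX (x : alg) n : `|x ^+ n| <= `|x| ^+ n.
Proof.
elim: n => [|n IH]; first by rewrite !expr0 alg_norm1.
by rewrite !exprS (le_trans (alg_normM _ _)) // ler_wpM2l.
Qed.

Lemma alg_eq0_norm_lt (x : alg) : (forall e, 0 < e -> `|x| < e) -> x = 0.
Proof.
move=> small; apply/eqP; rewrite -normr_le0; apply/ler_addgt0Pr => e e0.
by rewrite add0r ltW ?small.
Qed.

Lemma norm_neumann_sum_le (a : alg) k : `|a| <= 1 -> `|neumann_sum a k| * (1 - `|a|) <= 1.
Proof.
move=> a1; have le_sum : `|neumann_sum a k| <= neumann_sum `|a| k.
  by apply: le_trans (ler_norm_sum _ _ _) _; apply: ler_sum => i _; exact: alg_normX.
apply: le_trans (_ : neumann_sum `|a| k * (1 - `|a|) <= 1).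
  by rewrite ler_wpM2r // subr_ge0.
by rewrite neumann_sum_mul1B gerBl exprn_ge0.
Qed.

Lemma norm_neumann_sum_tail (a : alg) N k : `|a| <= 1 ->
  `|neumann_sum a (N + k) - neumann_sum a N| * (1 - `|a|) <= `|a| ^+ N.
Proof.
move=> a1; rewrite neumann_sumD addrAC subrr add0r.
apply: le_trans (_ : `|a| ^+ N * `|neumann_sum a k| * (1 - `|a|) <= _).
  rewrite ler_wpM2r ?subr_ge0 //; apply: le_trans (alg_normM _ _) _.
  by rewrite ler_wpM2r ?alg_normX.
by rewrite -mulrA ler_piMr ?exprn_ge0 ?norm_neumann_sum_le.
Qed.

Lemma neumann_sum_cauchy (a : alg) : `|a| < 1 ->
  forall e, 0 < e -> exists N, forall m n, (N <= m)%N -> (N <= n)%N ->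
    `|neumann_sum a m - neumann_sum a n| < e.
Proof.
move=> a1 e e0; have r1 : 0 < 1 - `|a| by rewrite subr_gt0.
have [N aN] : exists N, `|a| ^+ N < e / 2 * (1 - `|a|).
  by apply: exists_exprn_lt; rewrite // mulr_gt0 // divr_gt0.
have tail m : (N <= m)%N -> `|neumann_sum a m - neumann_sum a N| < e / 2.
  move=> /subnKC <-; rewrite -(ltr_pM2r r1).
  exact: le_lt_trans (norm_neumann_sum_tail _ _ (ltW a1)) aN.
exists N => m n Nm Nn; rewrite [e]splitr.
apply: le_lt_trans (ler_distD (neumann_sum a N) _ _) _.
by rewrite [X in _ + X]distrC ltrD ?tail.
Qed.

Lemma vinvertibleE (x : alg) : vinvertible x = exists y : alg, x * y = 1 /\ y * x = 1.
Proof. by []. Qed.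

Lemma vinvertible_1B (a : alg) : `|a| < 1 -> vinvertible (1 - a).
Proof.
move=> a1; have [l Sl] : exists l : alg, forall e, 0 < e ->
    exists N, forall n, (N <= n)%N -> `|neumann_sum a n - l| < e.
  exact: vcomplete (neumann_sum_cauchy a1).
have approx e : 0 < e -> exists n, 2 * `|l - neumann_sum a n| + `|a| ^+ n < e.
  move=> e0; have [N1 SN1] : exists N1, forall n, (N1 <= n)%N -> `|neumann_sum a n - l| < e / 4.
    by apply: Sl; lra.
  have [N2 aN2] : exists N2, `|a| ^+ N2 < e / 2 by apply: exists_exprn_lt => //; lra.
  exists (maxn N1 N2); rewrite distrC.
  have := SN1 _ (leq_maxl N1 N2).
  have : `|a| ^+ maxn N1 N2 <= `|a| ^+ N2.
    by apply: ler_wiXn2l => //; [exact: ltW | exact: leq_maxr].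
  lra.
have norm_1B : `|1 - a| <= 2.
  by apply: le_trans (ler_normB _ _) _; rewrite alg_norm1 lerD2l ltW.
rewrite vinvertibleE; exists l.
split; apply/eqP; rewrite -subr_eq0; apply/eqP; apply: alg_eq0_norm_lt => e e0;
  have [n lt_e] := approx e e0; apply: le_lt_trans lt_e.
- rewrite (_ : _ - 1 = (1 - a) * (l - neumann_sum a n) - a ^+ n); last first.
    by rewrite mulrBr mul1B_neumann_sum opprB addrA addrAC addrK.
  apply: le_trans (ler_normB _ _) _; rewrite lerD ?alg_normX //.
  by apply: le_trans (alg_normM _ _) _; rewrite ler_wpM2r.
- rewrite (_ : _ - 1 = (l - neumann_sum a n) * (1 - a) - a ^+ n); last first.
    by rewrite mulrBl neumann_sum_mul1B opprB addrA addrAC addrK.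
  apply: le_trans (ler_normB _ _) _; rewrite lerD ?alg_normX //.
  by apply: le_trans (alg_normM _ _) _; rewrite mulrC ler_wpM2r.
Qed.

Lemma vinvertibleM (x y : alg) : vinvertible x -> vinvertible y -> vinvertible (x * y).
Proof.
rewrite !vinvertibleE => -[x' [xx' x'x]] [y' [yy' y'y]]; exists (y' * x'); split.
- by rewrite mulrA -(mulrA x) yy' mulr1 xx'.
- by rewrite mulrA -(mulrA y') x'x mulr1 y'y.
Qed.

Lemma vinvertible_open (x : alg) : vinvertible x ->
  exists d, 0 < d /\ forall z : alg, `|z - x| < d -> vinvertible z.
Proof.
move=> invx; have := invx; rewrite vinvertibleE => -[y [xy _]].
have y0 : 0 < `|y|.
  by rewrite normr_gt0; apply: contra_eq_neq xy => ->; rewrite mulr0 eq_sym oner_neq0.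
exists `|y|^-1; split=> [|z zx]; first by rewrite invr_gt0.
have a1 : `|y * (x - z)| < 1.
  by apply: le_lt_trans (alg_normM _ _) _; rewrite distrC -(ltr_pM2l y0) mulfV ?gt_eqF in zx.
have -> : z = x * (1 - y * (x - z)) by rewrite mulrBr mulr1 mulrA xy mul1r opprB subrKC.
exact: vinvertibleM invx (vinvertible_1B a1).
Qed.

Lemma RqE (v : alg) q : Rq v q = v ^+ 2 - (2 * Req q) *: v + (qnorm q ^+ 2)%:A.
Proof. by []. Qed.

Lemma RqB (v : alg) p q : (Rq v p : alg) - (Rq v q : alg) =
  (2 * Req q - 2 * Req p) *: v + (qnorm p ^+ 2 - qnorm q ^+ 2)%:A.
Proof.
by rewrite !RqE !scalerBl opprD opprB addrACA [X in X + _ = _]addrC subrKA.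
Qed.

Lemma norm_RqB_le (v : alg) p q : `|(Rq v p : alg) - (Rq v q : alg)| <=
  qnorm (qsub p q) * (2 * `|v| + 4 * (2 * qnorm q + qnorm (qsub p q))).
Proof.
have dnorm := ler_dist_qnorm_sqr p q; set d := qnorm (qsub p q) in dnorm *.
rewrite RqB; apply: le_trans (ler_normD _ _) _; rewrite !alg_normZ alg_norm1 mulr1.
have dRe : `|2 * Req q - 2 * Req p| <= 2 * d.
  by rewrite -mulrBr normrM normr_nat distrC ler_pM2l ?ler_dist_Req.
have : `|2 * Req q - 2 * Req p| * `|v| <= 2 * d * `|v| by rewrite ler_wpM2r.
lra.
Qed.

Lemma Rq_continuous (v : alg) q e : 0 < e ->
  exists d, 0 < d /\ forall p, qnorm (qsub p q) < d -> `|(Rq v p : alg) - (Rq v q : alg)| < e.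
Proof.
move=> e0; pose K := 2 * `|v| + 8 * qnorm q + 4.
have K0 : 0 < K by rewrite /K; have := normr_ge0 v; have := qnorm_ge0 q; lra.
exists (Num.min 1 (e / K)); split=> [|p]; first by rewrite lt_min ltr01 divr_gt0.
rewrite lt_min => /andP[d1 dK]; apply: le_lt_trans (norm_RqB_le v p q) _.
move: d1 dK; set d := qnorm (qsub p q); rewrite ltr_pdivlMr // => d1 dK.
have : 0 <= d := qnorm_ge0 _.
rewrite /K in dK; nra.
Qed.
End QuaternionicBanachAlgebra.

Theorem mainTheorem7 (R : realType) (V : QBA R) (v : V) :
  (forall q : quat R, boundaryH (sigmaS v) q -> BSd v q) /\
  (forall q : quat R, BSd v q -> sigmaS v q).
Proof.
split=> q.
- move=> bd_sigma e e0; have [d [d0 near_q]] := Rq_continuous v q e0.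
  have [[p1 [p1q sigma_p1]] [p2 [p2q not_sigma_p2]]] := bd_sigma d d0.
  by split; [exists (Rq v p1) | exists (Rq v p2)]; split=> //; exact: near_q.
- move=> bd_sing inv_q; have [d [d0 inv_near]] := vinvertible_open inv_q.
  have [[y [yq sing_y]] _] := bd_sing d d0.
  exact: sing_y (inv_near y yq).
Qed.
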